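(* Let $(\mathbb{K},|\cdot|)$ be an algebraically closed normed field, $f\in\mathbb{K}[z]$ a polynomial of degree $n\ge2$, $\xi\in\mathbb{K}^n$ a root-vector of $f$, $N\ge1$ and $1\le p\le\infty$. Suppose $x\in\mathbb{K}^n$ has pairwise distinct components and $E(x)\le R$. Then $f$ has only simple zeros in $\mathbb{K}$, $x\in D_N$, and \[ \|T^{(N)}(x)-\xi\|\preceq\beta_N(E(x))\,\|x-\xi\|. \]
   Context: $a_0$ is the leading coefficient of $f$. For $1\le p\le\infty$, $\|x\|_p=(\sum_i|x_i|^p)^{1/p}$ (max-norm if $p=\infty$). For $x\in\mathbb{K}^n$, $\|x\|=(|x_1|,\dots,|x_n|)\in\mathbb{R}^n$, $\preceq$ the coordinatewise order. $d_i(x)=\min_{j\ne i}|x_i-x_j|$, $d(x)=(d_1(x),\dots,d_n(x))$; for $x\in\mathbb{K}^n$, $y\in\mathbb{R}^n$ with nonzero components, $x/y=(|x_1|/y_1,\dots,|x_n|/y_n)$. A root-vector of $f$ is $\xi$ with $f(z)=a_0\prod_i(z-\xi_i)$ for all $z$. $E(x)=\|(x-\xi)/d(x)\|_p$. Weierstrass-type maps: $T^{(0)}(x)=x$ on $D_0=\mathbb{K}^n$; $D_{N+1}=\{x\in D_N: x_i\ne T^{(N)}_j(x)\ \forall i\ne j\}$, and for $x\in D_{N+1}$, $T^{(N+1)}_i(x)=x_i-\dfrac{f(x_i)}{a_0\prod_{j\ne i}(x_i-T^{(N)}_j(x))}$. Real functions: $\omega(t)=\left(1+\frac{t}{(n-1)^{1/p}}\right)^{n-1}$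 (with $(n-1)^{1/p}=1$ if $p=\infty$), $\Psi(t)=(1+2t)\omega(t)$, $R$ the unique positive solution of $\Psi(t)=2$. On $[0,R]$: $\phi_0\equiv1$, $\omega_N(t)=\left(1+\frac{t\phi_N(t)}{(n-1)^{1/p}}\right)^{n-1}$, $\phi_{N+1}(t)=\frac{\omega_N(t)-1}{1-2t\omega_N(t)}$; for $N\ge1$, $\beta_N(t)=\omega_{N-1}(t)-1$. *)

From HB Require Import structures.
From mathcomp Require Import all_boot all_order all_algebra.
From mathcomp Require Import reals ereal exp.
Set Implicit Arguments. Unset Strict Implicit. Unset Printing Implicit Defensive.
Import Order.TTheory GRing.Theory Num.Theory.
Local Open Scope ring_scope.

Section Defs.
Variables (R : realType) (K : closedFieldType).

Definition is_absval (abs : K -> R) : Prop :=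
  (forall x, abs x = 0 <-> x = 0) /\
  (forall x y, abs (x * y) = abs x * abs y) /\
  (forall x y, abs (x + y) <= abs x + abs y).

(* p-norm on R^n, p in [1, +oo] encoded as an extended real ( +oo = max-norm ). *)
Definition pnorm (n : nat) (p : \bar R) (v : 'I_n -> R) : R :=
  match p with
  | EFin q => (\sum_(i < n) `|v i| `^ q) `^ q^-1
  | +oo%E => \big[Num.max/0]_(i < n) `|v i|
  | -oo%E => 0
  end.

Definition rootp (n : nat) (p : \bar R) : R :=
  match p with
  | EFin q => (n.-1)%:R `^ q^-1
  | _ => 1
  end.

Variables (abs : K -> R).

(* d_i(x) = min_{j <> i} |x_i - x_j|  (the max is only used as a neutral
   element of the min; for n >= 2 the index set is nonempty). *)
Definition dist_i (n : nat) (x : 'I_n -> K) (i : 'I_n) : R :=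
  \big[Num.min/ \big[Num.max/0]_(j < n) abs (x i - x j)]_(j < n | j != i)
     abs (x i - x j).

Definition Efun (n : nat) (p : \bar R) (xi x : 'I_n -> K) : R :=
  pnorm p (fun i => abs (x i - xi i) / dist_i x i).

Variable (f : {poly K}).

Definition root_vector (n : nat) (xi : 'I_n -> K) : Prop :=
  forall z : K, f.[z] = lead_coef f * \prod_(i < n) (z - xi i).

(* Weierstrass-type maps T^(N) (total; meaningful on D_N) *)
Fixpoint Tmap (n : nat) (N : nat) (x : 'I_n -> K) : 'I_n -> K :=
  match N with
  | 0%N => x
  | N'.+1 => fun i => x i - f.[x i] /
              (lead_coef f * \prod_(j < n | j != i) (x i - Tmap N' x j))
  end.

Fixpoint Dom (n : nat) (N : nat) (x : 'I_n -> K) : Prop :=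
  match N with
  | 0%N => True
  | N'.+1 => Dom N' x /\ (forall i j : 'I_n, i != j -> x i != Tmap N' x j)
  end.

End Defs.

Section RealFuns.
Variables (R : realType) (n : nat) (p : \bar R).

Definition omega (t : R) : R := (1 + t / rootp n p) ^+ n.-1.
Definition Psi (t : R) : R := (1 + 2 * t) * omega t.

Fixpoint phiN (N : nat) (t : R) : R :=
  match N with
  | 0%N => 1
  | N'.+1 => let w := (1 + t * phiN N' t / rootp n p) ^+ n.-1 in
             (w - 1) / (1 - 2 * t * w)
  end.
Definition omegaN (N : nat) (t : R) : R := (1 + t * phiN N t / rootp n p) ^+ n.-1.
Definition betaN (N : nat) (t : R) : R := omegaN N.-1 t - 1.

End RealFuns.

From HB Require Import structures.
From mathcomp Require Import all_boot all_order all_algebra.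
From mathcomp Require Import reals ereal exp hoelder.
From mathcomp Require Import lra ring.
Set Implicit Arguments. Unset Strict Implicit. Unset Printing Implicit Defensive.
Import Order.TTheory GRing.Theory Num.Theory.
Local Open Scope ring_scope.

(* With [u_j = |x_j - xi_j| / d_j] and [E = E(x)], one step of the iteration
   satisfies [T^(N+1)_i - xi_i = (x_i - xi_i) (1 - prod_(j <> i) (1 + a_j))]
   with [a_j = (T^(N)_j - xi_j) / (x_i - T^(N)_j)].  By induction on N,
   [|T^(N)_j - xi_j| <= phi_N(E) u_j |x_i - T^(N)_j|] for all [i <> j], so
   [|1 - prod (1 + a_j)| <= prod (1 + phi_N u_j) - 1 <= omega_N(E) - 1] by
   AM-GM and Hoelder.  The recurrence defining [phi_(N+1)] is exactly what
   propagates the induction, since [|x_i - T^(N+1)_j| >= (1 - 2 E omega_N(E)) d_j]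
   and [2 E omega(E) < 1] follows from [Psi(E) <= Psi(R) = 2].  The same bound
   [2 E < 1] forbids [xi_i = xi_j] for [i <> j], hence the zeros are simple. *)

Section AbsoluteValue.
Variables (R : realType) (K : closedFieldType) (abs : K -> R).
Hypothesis habs : is_absval abs.

Lemma absval_eq0 x : abs x = 0 <-> x = 0.
Proof. by case: habs. Qed.

Lemma absvalM x y : abs (x * y) = abs x * abs y.
Proof. by case: habs => _ []. Qed.

Lemma absvalD x y : abs (x + y) <= abs x + abs y.
Proof. by case: habs => _ []. Qed.

Lemma absval0 : abs 0 = 0.
Proof. exact/absval_eq0. Qed.

(* Every element of [K] is a square, and [abs] is multiplicative. *)
Lemma absval_ge0 x : 0 <= abs x.
Proof.
have /closed_rootP [s] : size ('X^2 - x%:P : {poly K}) != 1%N.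
  by rewrite size_XnsubC.
rewrite rootE !hornerE subr_eq0 => /eqP <-.
by rewrite expr2 absvalM -expr2 sqr_ge0.
Qed.

Lemma absval_gt0 x : x != 0 -> 0 < abs x.
Proof.
move=> x_neq0; rewrite lt_neqAle absval_ge0 andbT eq_sym.
by apply: contra_neq x_neq0 => /absval_eq0.
Qed.

Lemma absval1 : abs 1 = 1.
Proof.
have abs1_neq0 : abs 1 != 0 by apply/eqP => /absval_eq0/eqP; rewrite oner_eq0.
by apply: (mulfI abs1_neq0); rewrite -absvalM !mulr1.
Qed.

Lemma absvalN x : abs (- x) = abs x.
Proof.
suff abs_N1 : abs (-1) = 1 by rewrite -mulN1r absvalM abs_N1 mul1r.
have /eqP : abs (-1) ^+ 2 = 1 by rewrite expr2 -absvalM mulrNN mulr1 absval1.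
rewrite sqrf_eq1 => /orP [/eqP // | /eqP abs_N1].
by have := absval_ge0 (-1); rewrite abs_N1 ler0N1.
Qed.

Lemma absvalB x y : abs (x - y) = abs (y - x).
Proof. by rewrite -absvalN opprB. Qed.

Lemma absval_lerB x y : abs x - abs y <= abs (x - y).
Proof. by rewrite lerBlDr; have := absvalD (x - y) y; rewrite subrK. Qed.

Lemma absvalV x : abs x^-1 = (abs x)^-1.
Proof.
have [-> | x_neq0] := eqVneq x 0; first by rewrite invr0 absval0 invr0.
have abs_x_neq0 : abs x != 0 by rewrite gt_eqF // absval_gt0.
by apply: (mulfI abs_x_neq0); rewrite -absvalM !divff // absval1.
Qed.

Lemma absval_div x y : abs (x / y) = abs x / abs y.
Proof. by rewrite absvalM absvalV. Qed.

Lemma absval_prod (I : Type) (r : seq I) (P : pred I) (F : I -> K) :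
  abs (\prod_(i <- r | P i) F i) = \prod_(i <- r | P i) abs (F i).
Proof. exact: (big_morph abs absvalM absval1). Qed.

Lemma absval_1Bprod (I : Type) (r : seq I) (P : pred I) (a : I -> K) :
  abs (1 - \prod_(j <- r | P j) (1 + a j)) <= \prod_(j <- r | P j) (1 + abs (a j)) - 1.
Proof.
elim: r => [|j r IH]; first by rewrite !big_nil subrr absval0 subrr.
rewrite !big_cons; case: (P j) => //.
set A := \prod_(k <- r | P k) (1 + a k) in IH *.
set B := \prod_(k <- r | P k) (1 + abs (a k)) in IH *.
have abs_A_le : abs A <= B.
  rewrite absval_prod; apply: ler_prod => k _.
  by rewrite absval_ge0 -[X in _ <= X + _]absval1 absvalD.
have -> : 1 - (1 + a j) * A = (1 - A) + - (a j * A) by ring.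
apply: le_trans (absvalD _ _) _; rewrite absvalN absvalM.
have : abs (a j) * abs A <= abs (a j) * B by rewrite ler_wpM2l ?absval_ge0.
lra.
Qed.

End AbsoluteValue.

Section ClosedFieldPoly.
Variable K : closedFieldType.

(* If [q != 0] then [q * 'X + 1] is not constant, so it has a root [w],
   which forces [q.[w] != 0]. *)
Lemma horner_eq0_poly (q : {poly K}) : (forall w, q.[w] = 0) -> q = 0.
Proof.
move=> q_eq0; apply: contraPeq isT => q_neq0.
have /closed_rootP [w] : size (q * 'X + 1%:P) != 1%N.
  by rewrite size_MXaddC oner_eq0 andbF eqSS size_poly_eq0.
by rewrite rootE !hornerE q_eq0 mul0r add0r oner_eq0.
Qed.

Lemma root_vectorE (f : {poly K}) (n : nat) (xi : 'I_n -> K) :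
  root_vector f xi -> f = lead_coef f *: \prod_(i < n) ('X - (xi i)%:P).
Proof.
move=> hxi; apply/eqP; rewrite -subr_eq0; apply/eqP/horner_eq0_poly => w.
rewrite hornerD hornerN hornerZ horner_prod hxi.
by under eq_bigr do rewrite hornerXsubC; rewrite subrr.
Qed.

Lemma root_vector_simple (f : {poly K}) (n : nat) (xi : 'I_n -> K) :
  lead_coef f != 0 -> injective xi -> root_vector f xi ->
  forall z, root f z -> ~~ (('X - z%:P) ^+ 2 %| f).
Proof.
move=> f_neq0 xi_inj hxi z.
rewrite rootE hxi mulf_eq0 (negbTE f_neq0) => /prodf_eq0 [k _].
rewrite subr_eq0 => /eqP ->.
pose g := lead_coef f *: \prod_(j < n | j != k) ('X - (xi j)%:P).
have -> : f = ('X - (xi k)%:P) * g.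
  by rewrite {1}(root_vectorE hxi) (bigD1 k) //= scalerAr.
rewrite expr2 dvdp_mul2l ?polyXsubC_eq0 // dvdp_XsubCl rootE /g.
rewrite hornerZ horner_prod mulf_eq0 negb_or f_neq0 /=.
apply/prodf_neq0 => j j_neq_k.
by rewrite hornerXsubC subr_eq0 (inj_eq xi_inj) eq_sym.
Qed.

Lemma Tmap_succ_subE (f : {poly K}) (n : nat) (xi x : 'I_n -> K) N i :
  lead_coef f != 0 -> root_vector f xi ->
  (forall j, i != j -> x i != Tmap f N x j) ->
  Tmap f N.+1 x i - xi i = (x i - xi i) *
    (1 - \prod_(j < n | j != i) (1 + (Tmap f N x j - xi j) / (x i - Tmap f N x j))).
Proof.
move=> f_neq0 hxi x_neq_T; set y := Tmap f N x.
have diff_neq0 j : j != i -> x i - y j != 0.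
  by rewrite subr_eq0 eq_sym => /x_neq_T.
have prodE : \prod_(j < n | j != i) (x i - xi j) / \prod_(j < n | j != i) (x i - y j)
    = \prod_(j < n | j != i) (1 + (y j - xi j) / (x i - y j)).
  rewrite -prodf_div; apply: eq_bigr => j /diff_neq0 ne0.
  by field.
have prod_neq0 : \prod_(j < n | j != i) (x i - y j) != 0.
  by apply/prodf_neq0 => j /diff_neq0.
have f_xi : f.[x i] = lead_coef f * ((x i - xi i) * \prod_(j < n | j != i) (x i - xi j)).
  by rewrite hxi (bigD1 i).
have -> : Tmap f N.+1 x i =
  x i - f.[x i] / (lead_coef f * \prod_(j < n | j != i) (x i - y j)) by [].
rewrite f_xi -prodE; field.
by rewrite f_neq0 prod_neq0.
Qed.

End ClosedFieldPoly.

Lemma rootp_gt0 (R : realType) (n : nat) (p : \bar R) : (1 < n)%N -> 0 < rootp n p.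
Proof.
move=> n_gt1; case: p => [q| |] //=; apply: powR_gt0.
by rewrite ltr0n; case: n n_gt1 => [|[|m]].
Qed.

Section OmegaPhi.
Variables (R : realType) (n : nat) (p : \bar R) (Rr : R).
Hypotheses (n_gt1 : (1 < n)%N) (PsiR : Psi n p Rr = 2).

Let rootp_pos : 0 < rootp n p := rootp_gt0 p n_gt1.
Let rootp_ge0 : 0 <= rootp n p := ltW rootp_pos.

Lemma omega_ge1 s : 0 <= s -> 1 <= omega n p s.
Proof. by move=> s_ge0; rewrite exprn_ege1 // lerDl divr_ge0. Qed.

Lemma omega_gt1 s : 0 < s -> 1 < omega n p s.
Proof.
move=> s_gt0; rewrite /omega expr_gt1 ?ltrDl ?divr_gt0 //.
- by case: n n_gt1 => [|[|m]].
- by rewrite addr_ge0 // divr_ge0 // ltW.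
Qed.

Lemma ler_omega s s' : 0 <= s -> s <= s' -> omega n p s <= omega n p s'.
Proof.
move=> s_ge0 le_ss'; have s'_ge0 := le_trans s_ge0 le_ss'.
apply: lerXn2r; rewrite ?nnegrE ?addr_ge0 ?divr_ge0 //.
by rewrite lerD2l ler_pM2r ?invr_gt0.
Qed.

Lemma omegaN_bounds N s : 0 <= s -> 0 <= phiN n p N s <= 1 ->
  1 <= omegaN n p N s <= omega n p s.
Proof.
move=> s_ge0 /andP [phi_ge0 phi_le1]; apply/andP; split.
  by rewrite exprn_ege1 // lerDl divr_ge0 ?mulr_ge0.
apply: lerXn2r; rewrite ?nnegrE ?addr_ge0 ?divr_ge0 ?mulr_ge0 //.
by rewrite lerD2l ler_pM2r ?invr_gt0 // ler_piMr.
Qed.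

Lemma Psi_le2 t : 0 <= t -> t <= Rr -> Psi n p t <= 2.
Proof.
move=> t_ge0 le_tR; rewrite -PsiR; apply: ler_pM; last exact: ler_omega.
- lra.
- exact: le_trans ler01 (omega_ge1 t_ge0).
- lra.
Qed.

Lemma two_omega_lt1 t : 0 <= t -> t <= Rr -> 2 * t * omega n p t < 1.
Proof.
move=> t_ge0 le_tR; have [-> | t_neq0] := eqVneq t 0; first by rewrite mulr0 mul0r.
have omega_t_gt1 : 1 < omega n p t by rewrite omega_gt1 // lt_def t_neq0.
by have := Psi_le2 t_ge0 le_tR; rewrite /Psi mulrDl mul1r; lra.
Qed.

Lemma phiN_bounds t N : 0 <= t -> t <= Rr -> 0 <= phiN n p N t <= 1.
Proof.
move=> t_ge0 le_tR; elim: N => [|N IH]; first by rewrite /= ler01 lexx.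
have /andP [w_ge1 w_le] := omegaN_bounds t_ge0 IH.
have le_omegaN : 2 * t * omegaN n p N t <= 2 * t * omega n p t.
  by rewrite ler_wpM2l // mulr_ge0.
have lt1 := two_omega_lt1 t_ge0 le_tR.
have le2 : (1 + 2 * t) * omegaN n p N t <= 2.
  apply: le_trans (Psi_le2 t_ge0 le_tR); rewrite ler_wpM2l //; lra.
change (phiN n p N.+1 t) with
  ((omegaN n p N t - 1) / (1 - 2 * t * omegaN n p N t)).
rewrite divr_ge0 ?ler_pdivrMr ?mul1r; lra.
Qed.

Lemma two_omegaN_lt1 t N : 0 <= t -> t <= Rr -> 2 * t * omegaN n p N t < 1.
Proof.
move=> t_ge0 le_tR; apply: le_lt_trans (two_omega_lt1 t_ge0 le_tR).
have /andP [_ le_omega] := omegaN_bounds t_ge0 (phiN_bounds N t_ge0 le_tR).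
by rewrite ler_wpM2l // mulr_ge0.
Qed.

Lemma phiN_succ_mul t N : 0 <= t -> t <= Rr ->
  phiN n p N.+1 t * (1 - 2 * t * omegaN n p N t) = omegaN n p N t - 1.
Proof.
move=> t_ge0 le_tR; apply: divfK.
by rewrite subr_eq0 eq_sym lt_eqF // two_omegaN_lt1.
Qed.

End OmegaPhi.

Lemma hoelder_ones (R : realType) (I : Type) (r : seq I) (P : pred I) (c : I -> R) (q : R) :
  1 <= q -> (forall j, 0 <= c j) ->
  \sum_(j <- r | P j) c j <=
  (\sum_(j <- r | P j) c j `^ q) `^ q^-1 * (\sum_(j <- r | P j) 1) `^ (1 - q^-1).
Proof.
move=> q_ge1 c_ge0; have [-> | q_neq1] := eqVneq q 1.
  rewrite invr1 subrr powRr0 mulr1 powRr1; last by apply: sumr_ge0 => j _; exact: powR_ge0.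
  by apply: ler_sum => j _; rewrite powRr1.
have q_gt1 : 1 < q by rewrite lt_def q_neq1.
have q_gt0 : 0 < q by lra.
pose q' := (1 - q^-1)^-1.
have q'_gt0 : 0 < q' by rewrite invr_gt0 subr_gt0 invf_lt1.
elim: r => [|j r IH]; first by rewrite !big_nil mulr_ge0 // powR_ge0.
rewrite !big_cons; case: (P j) => //.
set A := \sum_(k <- r | P k) c k `^ q.
set k := \sum_(k <- r | P k) (1 : R).
have A_ge0 : 0 <= A by apply: sumr_ge0 => l _; exact: powR_ge0.
have k_ge0 : 0 <= k by apply: sumr_ge0 => l _; exact: ler01.
apply: le_trans (lerD (lexx (c j)) IH) _.
have := hoelder2 (c_ge0 j) (powR_ge0 A q^-1) ler01 (powR_ge0 k (1 - q^-1)) q_gt0 q'_gt0.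
rewrite invrK addrCA subrr addr0 => /(_ erefl).
rewrite mulr1 -!powRrM mulVf ?gt_eqF // powRr1 //.
rewrite mulrC mulfV ?gt_eqF ?subr_gt0 ?invf_lt1 // powRr1 // powR1.
by rewrite (addrC 1 k).
Qed.

Section PNorm.
Variables (R : realType) (n : nat) (p : \bar R) (u : 'I_n -> R).
Hypotheses (n_gt1 : (1 < n)%N) (p_ge1 : (1 <= p)%E) (u_ge0 : forall j, 0 <= u j).

Let n1_gt0 : 0 < n.-1%:R :> R.
Proof. by rewrite ltr0n; case: n n_gt1 => [|[|m]]. Qed.

Lemma ler_coord_pnorm j : u j <= pnorm p u.
Proof.
case: p p_ge1 => [q| |] //=; last by move=> _; rewrite -[u j]ger0_norm ?le_bigmax.
rewrite lee_fin => q_ge1; have q_gt0 : 0 < q by lra.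
have {1}-> : u j = (`|u j| `^ q) `^ q^-1.
  by rewrite -powRrM mulfV ?gt_eqF // powRr1 // ger0_norm.
apply: ge0_ler_powR; rewrite ?nnegrE ?powR_ge0 //.
- by rewrite invr_ge0 ltW.
- by apply: sumr_ge0 => k _; exact: powR_ge0.
rewrite (bigD1 j) //= lerDl.
by apply: sumr_ge0 => k _; exact: powR_ge0.
Qed.

Lemma mean_le_pnorm i : (\sum_(j < n | j != i) u j) / n.-1%:R <= pnorm p u / rootp n p.
Proof.
have card_i : \sum_(j < n | j != i) (1 : R) = n.-1%:R.
  by rewrite sumr_const cardC1 card_ord.
case: p p_ge1 => [q| |] //= q_ge1.
- rewrite lee_fin in q_ge1; have q_gt0 : 0 < q by lra.
  have := hoelder_ones (index_enum 'I_n) (fun j => j != i) q_ge1 (fun j => normr_ge0 (u j)).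
  rewrite card_i => le_hoelder.
  have le_all : (\sum_(j < n | j != i) `|u j| `^ q) `^ q^-1 <= (\sum_(j < n) `|u j| `^ q) `^ q^-1.
    apply: ge0_ler_powR; rewrite ?nnegrE.
    + by rewrite invr_ge0 ltW.
    + by apply: sumr_ge0 => j _; exact: powR_ge0.
    + by apply: sumr_ge0 => j _; exact: powR_ge0.
    rewrite [X in _ <= X](bigID (fun j => j != i)) /= lerDl.
    by apply: sumr_ge0 => j _; exact: powR_ge0.
  have split_m : n.-1%:R `^ (1 - q^-1) * n.-1%:R `^ q^-1 = n.-1%:R :> R.
    by rewrite -powRD ?subrK ?oner_eq0 // powRr1 // ler0n.
  rewrite ler_pdivrMr // -[X in _ <= _ * X]split_m mulrA mulrAC.
  rewrite divfK ?gt_eqF ?powR_gt0 //.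
  apply: le_trans (_ : _ <= \sum_(j < n | j != i) `|u j|) _.
    by apply: ler_sum => j _; exact: ler_norm.
  by apply: le_trans le_hoelder _; rewrite ler_wpM2r ?powR_ge0.
- rewrite divr1 ler_pdivrMr // -card_i mulr_sumr.
  apply: ler_sum => j _; rewrite mulr1.
  exact: le_trans (ler_norm _) (le_bigmax _ _ j).
Qed.

Lemma prod_le_omega i c : 0 <= c ->
  \prod_(j < n | j != i) (1 + c * u j) <= (1 + pnorm p u * c / rootp n p) ^+ n.-1.
Proof.
move=> c_ge0; have rootp_pos := rootp_gt0 p n_gt1.
have terms_ge0 : {in predC1 i, forall j, 0 <= 1 + c * u j}.
  by move=> j _; rewrite addr_ge0 // mulr_ge0.
have := (leif_AGM terms_ge0).1; rewrite cardC1 card_ord => /le_trans; apply.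
have pnorm_ge0 : 0 <= pnorm p u by exact: le_trans (u_ge0 i) (ler_coord_pnorm i).
apply: lerXn2r.
- by rewrite nnegrE divr_ge0 ?ler0n ?sumr_ge0.
- by rewrite nnegrE addr_ge0 // divr_ge0 ?mulr_ge0 // ltW.
rewrite big_split /= sumr_const cardC1 card_ord -mulr_sumr mulrDl divff ?gt_eqF //.
have -> : pnorm p u * c / rootp n p = c * (pnorm p u / rootp n p).
  by rewrite mulrAC mulrC.
by rewrite lerD2l -mulrA ler_wpM2l // mean_le_pnorm.
Qed.

End PNorm.

Section WeierstrassIteration.
Variables (R : realType) (K : closedFieldType) (abs : K -> R) (f : {poly K}).
Variables (n : nat) (xi x : 'I_n -> K) (p : \bar R) (Rr : R).
Hypotheses (habs : is_absval abs) (n_gt1 : (1 < n)%N) (f_neq0 : lead_coef f != 0).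
Hypotheses (hxi : root_vector f xi) (p_ge1 : (1 <= p)%E) (PsiR : Psi n p Rr = 2).
Hypotheses (x_inj : injective x) (E_le : Efun abs p xi x <= Rr).

Local Notation d := (dist_i abs x).
Local Notation u j := (abs (x j - xi j) / dist_i abs x j).
Local Notation t := (Efun abs p xi x).

Lemma abs_x_sub_gt0 i j : i != j -> 0 < abs (x i - x j).
Proof.
move=> i_neq_j; apply: (absval_gt0 habs); rewrite subr_eq0.
by apply: contra_neq i_neq_j => /x_inj.
Qed.

Lemma dist_gt0 j : 0 < d j.
Proof.
have [k k_neq_j] : exists k : 'I_n, k != j.
  have n_gt0 : (0 < n)%N by exact: ltnW.
  case: j => [[|m] lt_m_n]; first by exists (Ordinal n_gt1).
  by exists (Ordinal n_gt0).
rewrite /dist_i; elim/big_ind: _ => [|a b a_gt0 b_gt0|l l_neq_j].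
- apply: lt_le_trans (abs_x_sub_gt0 _) (le_bigmax _ _ k).
  by rewrite eq_sym.
- by rewrite lt_min a_gt0 b_gt0.
- by rewrite abs_x_sub_gt0 // eq_sym.
Qed.

Lemma dist_le i j : i != j -> d j <= abs (x i - x j).
Proof.
by move=> i_neq_j; rewrite (absvalB habs) /dist_i; apply: bigmin_le_cond.
Qed.

Lemma scaled_err_ge0 j : 0 <= u j.
Proof. by rewrite divr_ge0 ?(absval_ge0 habs) ?ltW ?dist_gt0. Qed.

Lemma scaled_err_le j : u j <= t.
Proof. exact: (ler_coord_pnorm p_ge1 scaled_err_ge0). Qed.

Lemma err_scaledE j : abs (x j - xi j) = u j * d j.
Proof. by rewrite divfK // gt_eqF // dist_gt0. Qed.

Lemma Efun_ge0 : 0 <= t.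
Proof. exact: le_trans (scaled_err_ge0 (Ordinal n_gt1)) (scaled_err_le _). Qed.

Definition err_invariant N := forall i j, i != j ->
  x i != Tmap f N x j /\
  abs (Tmap f N x j - xi j) <= phiN n p N t * u j * abs (x i - Tmap f N x j).

Lemma Tmap_succ_err_le N i : err_invariant N ->
  abs (Tmap f N.+1 x i - xi i) <= (omegaN n p N t - 1) * abs (x i - xi i).
Proof.
move=> inv; have x_neq_T j : i != j -> x i != Tmap f N x j by move=> /inv [].
rewrite Tmap_succ_subE // (absvalM habs) mulrC ler_wpM2r ?(absval_ge0 habs) //.
apply: le_trans (absval_1Bprod habs _ _ _) _; rewrite lerD2r.
have /andP [phi_ge0 _] := phiN_bounds n_gt1 PsiR N Efun_ge0 E_le.
apply: le_trans (prod_le_omega n_gt1 p_ge1 scaled_err_ge0 i phi_ge0).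
apply: ler_prod => j j_neq_i; rewrite addr_ge0 ?(absval_ge0 habs) //= lerD2l.
have i_neq_j : i != j by rewrite eq_sym.
have [neq le_err] := inv i j i_neq_j.
by rewrite (absval_div habs) ler_pdivrMr ?(absval_gt0 habs) ?subr_eq0.
Qed.

Lemma dist_Tmap_succ_ge N i j : i != j -> err_invariant N ->
  (1 - 2 * t * omegaN n p N t) * d j <= abs (x i - Tmap f N.+1 x j).
Proof.
move=> i_neq_j inv; set w := omegaN n p N t; set y := Tmap f N.+1 x j.
have err_y : abs (y - xi j) <= (w - 1) * abs (x j - xi j) := Tmap_succ_err_le j inv.
have y_near : abs (y - x j) <= w * abs (x j - xi j).
  have -> : y - x j = (y - xi j) + - (x j - xi j) by ring.
  apply: le_trans (absvalD habs _ _) _; rewrite (absvalN habs).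
  by rewrite mulrBl mul1r in err_y; lra.
have := absval_lerB habs (x i - x j) (y - x j).
have -> : x i - x j - (y - x j) = x i - y by ring.
have d_le := dist_le i_neq_j; have d_gt0 := dist_gt0 j; have t_ge0 := Efun_ge0.
have /andP [w_ge1 _] : 1 <= w <= omega n p t :=
  omegaN_bounds n_gt1 Efun_ge0 (phiN_bounds n_gt1 PsiR N Efun_ge0 E_le).
have err_le : abs (x j - xi j) <= t * d j.
  by rewrite err_scaledE ler_wpM2r ?scaled_err_le // ltW.
have td_ge0 : 0 <= t * d j by rewrite mulr_ge0 // ltW.
nra.
Qed.

Lemma err_invariant0 : err_invariant 0.
Proof.
move=> i j i_neq_j; split; first by apply: contra_neq i_neq_j => /x_inj.
rewrite /= mul1r {1}err_scaledE ler_wpM2l ?scaled_err_ge0 //.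
exact: dist_le.
Qed.

Lemma err_invariantS N : err_invariant N -> err_invariant N.+1.
Proof.
move=> inv i j i_neq_j; set w := omegaN n p N t.
have lt1 : 2 * t * w < 1 := two_omegaN_lt1 n_gt1 PsiR N Efun_ge0 E_le.
have L_ge := dist_Tmap_succ_ge i_neq_j inv.
have L_gt0 : 0 < abs (x i - Tmap f N.+1 x j).
  by apply: lt_le_trans L_ge; rewrite mulr_gt0 ?dist_gt0 ?subr_gt0.
split.
  by rewrite -subr_eq0; apply: contraTneq L_gt0 => ->; rewrite (absval0 habs) ltxx.
have phi_eq : w - 1 = phiN n p N.+1 t * (1 - 2 * t * w).
  by rewrite (phiN_succ_mul n_gt1 PsiR N Efun_ge0 E_le).
have /andP [phi_ge0 _] := phiN_bounds n_gt1 PsiR N.+1 Efun_ge0 E_le.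
apply: le_trans (Tmap_succ_err_le j inv) _.
rewrite -/w {1}err_scaledE phi_eq -mulrA -[X in _ <= X]mulrA ler_wpM2l //.
by rewrite mulrCA ler_wpM2l ?scaled_err_ge0.
Qed.

Lemma err_invariant_all N : err_invariant N.
Proof. by elim: N => [|N /err_invariantS]; [exact: err_invariant0 | ]. Qed.

Lemma Dom_Tmap N : Dom f N x.
Proof.
elim: N => [|N IH] //=; split=> // i j i_neq_j.
by have [] := err_invariant_all N i_neq_j.
Qed.

Lemma root_vector_injective : injective xi.
Proof.
move=> i j eq_xi; apply/eqP; apply: contraT => i_neq_j.
have t_ge0 := Efun_ge0.
have lt1 : 2 * t < 1.
  apply: le_lt_trans (two_omega_lt1 n_gt1 PsiR Efun_ge0 E_le).
  by rewrite -[X in X <= _]mulr1 ler_wpM2l ?mulr_ge0 // omega_ge1.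
have D_gt0 := abs_x_sub_gt0 i_neq_j.
have tri : abs (x i - x j) <= u i * d i + u j * d j.
  rewrite -!err_scaledE; have -> : x i - x j = (x i - xi i) + - (x j - xi j) by rewrite eq_xi; ring.
  by apply: le_trans (absvalD habs _ _) _; rewrite (absvalN habs).
have err_le k : d k <= abs (x i - x j) -> u k * d k <= t * abs (x i - x j).
  move=> le_d; apply: ler_pM => //.
  - exact: scaled_err_ge0.
  - exact: ltW (dist_gt0 k).
  - exact: scaled_err_le.
have le_i : u i * d i <= t * abs (x i - x j).
  by apply: err_le; rewrite (absvalB habs) dist_le // eq_sym.
have le_j : u j * d j <= t * abs (x i - x j) by rewrite err_le ?dist_le.
have : 2 * t * abs (x i - x j) < abs (x i - x j).
  by rewrite -[X in _ < X]mul1r ltr_pM2r.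
lra.
Qed.

End WeierstrassIteration.

Theorem lemma2p9 (R : realType) (K : closedFieldType) (abs : K -> R)
  (f : {poly K}) (n : nat) (xi : 'I_n -> K) (N : nat) (p : \bar R)
  (Rr : R) (x : 'I_n -> K) :
  is_absval abs ->
  (2 <= n)%N ->
  size f = n.+1 ->
  root_vector f xi ->
  (1 <= N)%N ->
  (1 <= p)%E ->
  0 < Rr -> Psi n p Rr = 2 ->
  injective x ->
  Efun abs p xi x <= Rr ->
  [/\ (forall z : K, root f z -> ~~ (('X - z%:P) ^+ 2 %| f)),
      Dom f N x &
      forall i : 'I_n,
        abs (Tmap f N x i - xi i) <= betaN n p N (Efun abs p xi x) * abs (x i - xi i)].
Proof.
move=> habs n_gt1 size_f hxi N_ge1 p_ge1 _ PsiR x_inj E_le.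
have f_neq0 : lead_coef f != 0 by rewrite lead_coef_eq0 -size_poly_eq0 size_f.
have inv := err_invariant_all habs n_gt1 f_neq0 hxi p_ge1 PsiR x_inj E_le.
split.
- exact: root_vector_simple f_neq0 (root_vector_injective habs n_gt1 p_ge1 PsiR x_inj E_le) hxi.
- exact: Dom_Tmap habs n_gt1 f_neq0 hxi p_ge1 PsiR x_inj E_le N.
- case: N N_ge1 => // N _ i.
  exact (Tmap_succ_err_le habs n_gt1 f_neq0 hxi p_ge1 PsiR x_inj E_le i (inv N)).
Qed.
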